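(* Let $(\Gamma,\mathfrak o,\mathfrak m,\mathfrak q)$ be a quantized Brauer graph such that $\Gamma$ is not the graph $\mathbb A_2$ (a single edge with two distinct endpoints), and let $A_\Gamma=KQ_\Gamma/I_\Gamma$ be the associated Brauer graph algebra. Let $\rho\subseteq\rho_\Gamma$ be a minimal generating set of $I_\Gamma$ chosen from the set $\rho_\Gamma$ of Brauer graph relations. Then $\rho$ contains all the relations of type one and all the relations of type three, and $\rho$ contains the relation of type two associated to an edge $s$ truncated at a vertex $\alpha$ if and only if the successor $s_1$ of $s$ at its other endpoint $\beta$ is also a truncated edge (i.e. $s_1$ is truncated at its other endpoint).
   Context: Let $K$ be a field. A Brauer graph $(\Gamma,\mathfrak o,\mathfrak m)$ consists of a finite connected graph $\Gamma$ with at least one edge (loops and multiple edges allowed), a multiplicity function $\mathfrak m:\Gamma_0\to\mathbb Z_{>0}$ on the vertex set $\Gamma_0$, and, for each vertex $\alpha$, a cyclic ordering $\mathfrak o$ of the edges incident with $\alpha$ (a loop at $\alpha$ occurs twice in this cyclic ordering, the two occurrences being treated as distinct). The valency $\mathrm{val}(\alpha)$ is the number of edges incident with $\alpha$, loops counted twice. An edge $t$ is the successor of $s$ at $\alpha$ if $t$ directly follows $s$ in the cyclic ordering at $\alpha$ (if $\mathrm{val}(\alpha)=1$ the unique edge is its own successor). An edge $s$ is truncated at $\alpha$ if $\mathrm{val}(\alpha)=1$, $\mathfrak m(\alpha)=1$ and $s$ is the edge at $\alpha$; $s$ is a truncated edge if it is truncated at one of its endpoints. The successor sequence of $s$ at $\alpha$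 is $s=s_0,s_1,\dots,s_{\mathrm{val}(\alpha)-1}$ with $s_{i+1}$ the successor of $s_i$ at $\alpha$. A quantizing function $\mathfrak q$ assigns $\mathfrak q_{s,\alpha}\in K\setminus\{0\}$ to each pair $(s,\alpha)$ with $s$ incident with $\alpha$ and $s$ not truncated at either endpoint; $(\Gamma,\mathfrak o,\mathfrak m,\mathfrak q)$ is a quantized Brauer graph. The Brauer graph algebra $A_\Gamma=KQ_\Gamma/I_\Gamma$ (paths written left to right) is: if $\Gamma=\mathbb A_2$ with both multiplicities $1$, $A_\Gamma=K[x]/(x^2)$. Otherwise $Q_\Gamma$ has a vertex $v_s$ for each edge $s$, and for each vertex $\alpha$ and each occurrence of $t$ as the successor of $s$ at $\alpha$ with $s$ not truncated at $\alpha$, an arrow $v_s\to v_t$. For $s$ at $\alpha$ not truncated at $\alpha$, with successor sequence $s_0,\dots,s_{v-1}$, $v=\mathrm{val}(\alpha)$, $s_v=s_0$, let $C_{s,\alpha}=a_0a_1\cdots a_{v-1}$, where $a_r$ is the arrow for $s_{r+1}$ succeeding $s_r$ at $\alpha$. The set $\rho_\Gamma$ of Brauer graph relations consists of: type one: for each edge $s$ with endpoints $\alpha,\beta$ not truncated at either, $\mathfrak q_{s,\alpha}C_{s,\alpha}^{\mathfrak m(\alpha)}-\mathfrak q_{s,\beta}C_{s,\beta}^{\mathfrak m(\beta)}$; type two: for each edge $s$ truncated at $\alpha$ with other endpoint $\beta$, writing $C_{s,\beta}=b_0b_1\cdots b_{\mathrm{val}(\beta)-1}$, the path $C_{s,\beta}^{\mathfrak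 m(\beta)}b_0$; type three: each path $ab$ of length $2$ in $Q_\Gamma$ that is not a subpath of any $C_{t,\gamma}$. $I_\Gamma$ is the ideal generated by $\rho_\Gamma$. *)

From HB Require Import structures.
From mathcomp Require Import all_boot all_order all_algebra all_fingroup.
Set Implicit Arguments. Unset Strict Implicit. Unset Printing Implicit Defensive.
Import GRing.Theory.
Local Open Scope ring_scope.

(* A quantized Brauer graph, encoded by halfT-edges (occurrences of edges at
   vertices):
   - [halfT]  : the finite set of halfT-edges (pairs (edge, endpoint occurrence);
               a loop contributes two halfT-edges at the same vertex);
   - [edgeT] : the finite set of edges, [edge h] the edge of halfT-edge h;
   - [other h] : the other halfT-edge of the same edge;
   - [succ]  : the permutation of halfT-edges whose cycles are the vertices,
               [succ h] being the occurrence that directly follows h in the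
               cyclic ordering at the vertex of h;
   - [mult h]  : multiplicity of the vertex of h;
   - [quant h] : the quantizing value q_{edge h, vertex of h}. *)
Record qbgraph (K : fieldType) := QBGraph {
  halfT : finType;
  edgeT : finType;
  edge : halfT -> edgeT;
  other : halfT -> halfT;
  succ : {perm halfT};
  mult : halfT -> nat;
  quant : halfT -> K }.

Section Brauer.
Variables (K : fieldType) (G : qbgraph K).
Local Notation H := (halfT G).
Local Notation E := (edgeT G).
Local Notation e := (@edge K G).
Local Notation iota := (@other K G).
Local Notation sg := (@succ K G).
Local Notation m := (@mult K G).

Definition valency (h : H) : nat := fingraph.order sg h.

Definition trunc_at (h : H) : bool := (valency h == 1%N) && (m h == 1%N).

Definition qbg_axioms : Prop :=
  (forall h, [/\ iota (iota h) = h, iota h != h & e (iota h) = e h]) /\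
  (forall h h', e h = e h' -> h' = h \/ h' = iota h) /\
  (forall s : E, exists h, e h = s) /\
  (0 < #|{: H}|)%N /\
  (forall h h', connect (fun x y => (y == sg x) || (y == iota x)) h h') /\
  (forall h, m (sg h) = m h /\ (0 < m h)%N) /\
  (forall h, ~~ trunc_at h -> ~~ trunc_at (iota h) -> @quant K G h != 0).

Definition is_A2 : Prop := #|{: E}| = 1%N /\ (forall h, sg h = h).

(* Quiver Q_Gamma: vertices = edges; arrows = halfT-edges h not truncated,
   arrow h : v_(e h) -> v_(e (succ h)). A path is a start vertex together
   with a (left-to-right) sequence of arrows. *)
Definition arrow_ok (a : H) : bool := ~~ trunc_at a.
Definition qpath := (E * seq H)%type.
Definition tgt (p : qpath) : E :=
  if p.2 is a :: s then e (sg (last a s)) else p.1.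
Definition valid (p : qpath) : bool :=
  match p.2 with
  | [::] => true
  | a :: s => [&& e a == p.1, path (fun x y => e (sg x) == e y) a s
                 & all arrow_ok (a :: s)]
  end.
Definition pmul (p u : qpath) : option qpath :=
  if tgt p == u.1 then Some (p.1, p.2 ++ u.2) else None.

(* Elements of KQ_Gamma, given by their coefficient on each path *)
Definition qfun := qpath -> K.
Definition pathf (p : qpath) : qfun := fun w => (w == p)%:R.

(* C_{s,alpha} for the occurrence h of s at alpha, and its powers *)
Definition cycle_arrows (h : H) : seq H := traject sg h (valency h).
Definition Cpow (h : H) (k : nat) : qpath :=
  (e h, flatten (nseq k (cycle_arrows h))).

Definition rel1 (h : H) : qfun := fun w =>
  @quant K G h * pathf (Cpow h (m h)) w
  - @quant K G (iota h) * pathf (Cpow (iota h) (m (iota h))) w.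
Definition rel2 (h : H) : qfun :=
  pathf (e h, (Cpow (iota h) (m (iota h))).2 ++ [:: iota h]).
Definition rel3 (a b : H) : qfun := pathf (e a, [:: a; b]).

Definition in_some_cycle (a b : H) : bool :=
  [exists h, arrow_ok h && infix [:: a; b] (Cpow h (m h)).2].

(* fixed choice of orientation of each edge for its type one relation *)
Definition edge_rep (s : E) : option H := [pick h | e h == s].

Definition is_rel1 (x : qfun) : Prop := exists s h,
  [/\ edge_rep s = Some h, ~~ trunc_at h, ~~ trunc_at (iota h) & x = rel1 h].
Definition is_rel2 (x : qfun) : Prop := exists h, trunc_at h /\ x = rel2 h.
Definition is_rel3 (x : qfun) : Prop := exists a b,
  [/\ arrow_ok a, arrow_ok b, e (sg a) = e b, ~~ in_some_cycle a b
    & x = rel3 a b].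
Definition brauer_relations (x : qfun) : Prop :=
  is_rel1 x \/ is_rel2 x \/ is_rel3 x.

(* coefficient of w in p * r * q, for paths p, q and r in KQ *)
Definition sandwich (p : qpath) (r : qfun) (q : qpath) (w : qpath) : K :=
  let u := (tgt p, drop (size p.2) (take (size w.2 - size q.2) w.2)) in
  if (size p.2 + size q.2 <= size w.2)%N &&
     (obind (fun pu => pmul pu q) (pmul p u) == Some w)
  then r u else 0.

Definition gen_ideal (S : qfun -> Prop) (x : qfun) : Prop :=
  exists n (c : 'I_n -> K) (p q : 'I_n -> qpath) (r : 'I_n -> qfun),
    (forall i, [/\ S (r i), valid (p i) & valid (q i)]) /\
    (forall w, x w = \sum_(i < n) c i * sandwich (p i) (r i) (q i) w).

Definition generates (S : qfun -> Prop) : Prop :=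
  forall x, gen_ideal S x <-> gen_ideal brauer_relations x.

Definition minimal_generating (rho : qfun -> Prop) : Prop :=
  generates rho /\
  forall rho' : qfun -> Prop, (forall x, rho' x -> rho x) ->
    ~ (forall x, rho x -> rho' x) -> ~ generates rho'.

End Brauer.

From HB Require Import structures.
From mathcomp Require Import all_boot all_order all_algebra all_fingroup.
From mathcomp Require Import ring zify.
From Stdlib Require Import Classical.
Set Implicit Arguments. Unset Strict Implicit. Unset Printing Implicit Defensive.
Import GRing.Theory.

(* Two facts about the ideal generated by a set S of relations, whose elements
   are sums of products p * r * q (r in S, p and q paths), carry the proof:
   - independence: a Brauer relation that is the only Brauer relation nonzero
     on the factors of some path w0 lies in every generating set of Brauer
     relations, since every element of the ideal of the others vanishes at w0
     [gen_ideal_vanish, relation_needed];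
   - redundancy: a minimal generating set contains no relation x whose products
     p * x * q all lie in the ideal of the other relations [minimal_irredundant].
   The witnesses C^m_{s,alpha}, ab and C^m_{s,beta} s show that type one, type
   three, and (when s_1 is truncated) type two relations are needed. When s_1 is
   not truncated, an explicit identity expresses p (C^m_{s,beta} s) q through
   the type one relation of s_1 and the type three relation s i(s_1), so the
   type two relation is redundant. *)

Lemma infix_size_eq (T : eqType) (s t : seq T) :
  infix s t -> size s = size t -> s = t.
Proof.
case/infixP=> [s1 [s2 ->]]; rewrite !size_cat => Est.
have [-> ->] : s1 = [::] /\ s2 = [::].
  by case: s1 s2 Est => [|? ?] [|? ?] //= Est; lia.
by rewrite cats0.
Qed.

Lemma infix_pair_fpath (T : eqType) (f : T -> T) x s a b :
  fpath f x s -> infix [:: a; b] (x :: s) -> b = f a.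
Proof.
elim: s x => [|y s IH] x; first by rewrite infixs1 => _ /orP[] /eqP.
move=> /= /andP[/eqP xy ps] /orP[/and3P[/eqP-> /eqP-> _]|Hs]; first by rewrite xy.
exact: IH ps Hs.
Qed.

Section IdealCalculus.
Variables (K : fieldType) (G : qbgraph K).
Local Notation qpath := (qpath G).
Local Notation qfun := (qfun G).
Local Open Scope ring_scope.
Implicit Types (p q u w Z : qpath) (r x y : qfun) (S : qfun -> Prop).

Definition pcat p Z q : option qpath := obind (fun pu => pmul pu q) (pmul p Z).

Lemma pcatE p Z q w : pcat p Z q = Some w ->
  [/\ tgt p = Z.1, tgt (p.1, p.2 ++ Z.2) = q.1 & w = (p.1, p.2 ++ Z.2 ++ q.2)].
Proof.
rewrite /pcat /pmul; case: eqP => //= tp; case: eqP => //= tq [<-].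
by rewrite catA.
Qed.

Lemma pcat_some p Z q : tgt p = Z.1 -> tgt (p.1, p.2 ++ Z.2) = q.1 ->
  pcat p Z q = Some (p.1, p.2 ++ Z.2 ++ q.2).
Proof.
by rewrite /pcat /pmul => -> /=; rewrite eqxx /= => ->; rewrite eqxx catA.
Qed.

Lemma pcat_none p Z q :
  ~~ ((tgt p == Z.1) && (tgt (p.1, p.2 ++ Z.2) == q.1)) -> pcat p Z q = None.
Proof. by rewrite /pcat /pmul; case: eqP => //= _; case: eqP. Qed.

Lemma sandwich_pathf p Z q w :
  sandwich p (pathf Z) q w = ((pcat p Z q == Some w)%:R : K).
Proof.
rewrite /sandwich /pathf; case Epc: (pcat p Z q == Some w).
  have [tp tq ew] := pcatE (eqP Epc).
  have -> : (tgt p, drop (size p.2) (take (size w.2 - size q.2) w.2)) = Z.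
    rewrite ew /= catA size_cat addnK take_size_cat ?size_cat //.
    by rewrite drop_size_cat // tp -surjective_pairing.
  by rewrite -/(pcat _ _ _) Epc ew /= !size_cat leq_add2l leq_addl eqxx.
case: ifP => // /andP[_ C]; case: eqP => uZ //.
by move: Epc; rewrite /pcat -uZ C.
Qed.

Lemma sandwich_lin p q (a b : K) r1 r2 w :
  sandwich p (fun z => a * r1 z - b * r2 z) q w =
  (a * sandwich p r1 q w - b * sandwich p r2 q w).
Proof. by rewrite /sandwich; case: ifP => _ //; rewrite !mulr0 subr0. Qed.

Lemma sandwich_support p q r w : sandwich p r q w != 0 ->
  exists2 u, r u != 0 & infix u.2 w.2.
Proof.
rewrite /sandwich; case: ifP => [_ nz|]; last by rewrite eqxx.
exists (tgt p, drop (size p.2) (take (size w.2 - size q.2) w.2)) => //.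
exact: infix_trans (infix_drop _ _) (infix_take _ _).
Qed.

Lemma sandwich_trivial x (v v' : edgeT G) :
  (forall w, x w != 0 -> w.1 = v /\ tgt w = v') ->
  sandwich (v, [::]) x (v', [::]) =1 x.
Proof.
move=> supp w; rewrite /sandwich /pmul /= subn0 take_size drop0 eqxx /= cats0.
have [xw|/supp[w1 tw]] := eqVneq (x w) 0.
  by case: ifP => // /eqP; case: ifP => // _ [ew]; rewrite /= ew.
by rewrite -w1 -surjective_pairing tw !eqxx.
Qed.

Lemma qfun_neq x y w : x w != 0 -> y w = 0 -> x <> y.
Proof. by move=> xw yw exy; move: xw; rewrite exy yw eqxx. Qed.

Lemma gen_ideal_ext S x y : x =1 y -> gen_ideal S y -> gen_ideal S x.
Proof.
move=> xy [n [c [p [q [r [Hr Hy]]]]]]; exists n, c, p, q, r.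
by split=> // w; rewrite xy.
Qed.

Lemma gen_ideal0 S : gen_ideal S (fun=> 0).
Proof.
have no_index : 'I_0 -> qpath by case.
exists 0%N, (fun=> 0), no_index, no_index, (fun=> fun=> 0).
by split=> [[]|w] //; rewrite big_ord0.
Qed.

Lemma gen_ideal_sandwich S r p q :
  S r -> valid p -> valid q -> gen_ideal S (sandwich p r q).
Proof.
move=> Sr vp vq; exists 1%N, (fun=> 1), (fun=> p), (fun=> q), (fun=> r).
by split=> // w; rewrite big_ord1 mul1r.
Qed.

Lemma gen_ideal_lin S (a b : K) x y : gen_ideal S x -> gen_ideal S y ->
  gen_ideal S (fun w => a * x w + b * y w).
Proof.
move=> [n [c [p [q [r [Hr Hx]]]]]] [n' [c' [p' [q' [r' [Hr' Hy]]]]]].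
pose pick T (f : 'I_n -> T) (f' : 'I_n' -> T) (i : 'I_(n + n')) :=
  match split i with inl j => f j | inr j => f' j end.
exists (n + n')%N, (pick _ (fun j => a * c j) (fun j => b * c' j)),
  (pick _ p p'), (pick _ q q'), (pick _ r r'); split=> [i|w].
  by rewrite /pick; case: (split i) => j; [case: (Hr j) | case: (Hr' j)].
rewrite Hx Hy big_split_ord !mulr_sumr /pick; congr (_ + _).
  by apply: eq_bigr => j _; rewrite (unsplitK (inl _ : 'I_n + 'I_n')) mulrA.
by apply: eq_bigr => j _; rewrite (unsplitK (inr _ : 'I_n + 'I_n')) mulrA.
Qed.

Lemma gen_ideal_sub S (S' : qfun -> Prop) x :
  (forall r p q, S r -> valid p -> valid q -> gen_ideal S' (sandwich p r q)) ->
  gen_ideal S x -> gen_ideal S' x.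
Proof.
move=> sub [n [c [p [q [r [Hr Hx]]]]]]; apply: gen_ideal_ext Hx _.
elim: n c p q r Hr => [|n IH] c p q r Hr.
  apply: (gen_ideal_ext (y := fun=> 0)) => [w|]; last exact: gen_ideal0.
  by rewrite big_ord0.
apply: (gen_ideal_ext (y := fun w => 1 * _ + c ord_max * _)) => [w|].
  by rewrite big_ord_recr mul1r.
apply: gen_ideal_lin; first exact: (IH _ _ _ _ (fun i => Hr (widen_ord _ i))).
by case: (Hr ord_max) => Sr vp vq; apply: sub.
Qed.

Lemma gen_ideal_vanish S x w0 : gen_ideal S x ->
  (forall r u, S r -> infix u.2 w0.2 -> r u = 0) -> x w0 = 0.
Proof.
case=> n [c [p [q [r [Hr ->]]]]] Svan; apply: big1 => i _.
have [->|/sandwich_support[u ru iu]] := eqVneq (sandwich (p i) (r i) (q i) w0) 0.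
  by rewrite mulr0.
by case: (Hr i) => Sr _ _; move: ru; rewrite Svan ?eqxx.
Qed.

Lemma minimal_irredundant rho x : minimal_generating rho -> rho x ->
  (forall p q, valid p -> valid q ->
     gen_ideal (fun r => rho r /\ r <> x) (sandwich p x q)) -> False.
Proof.
case=> gen min rx redundant; apply: (min (fun r => rho r /\ r <> x)).
- by move=> r [].
- by move=> all; case: (all _ rx).
move=> y; split=> [gy|/(gen y).2].
  apply/(gen y).1; apply: gen_ideal_sub gy => r p q [rr _].
  exact: gen_ideal_sandwich.
apply: gen_ideal_sub => r p q rr vp vq.
have [->|nrx] := classic (r = x); first exact: redundant.
exact: gen_ideal_sandwich.
Qed.

End IdealCalculus.

Section BrauerGraph.
Variables (K : fieldType) (G : qbgraph K).
Hypothesis HG : qbg_axioms G.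
Local Open Scope ring_scope.
Local Notation H := (halfT G).
Local Notation E := (edgeT G).
Local Notation e := (@edge K G).
Local Notation iota := (@other K G).
Local Notation sg := (@succ K G).
Local Notation m := (@mult K G).

Lemma otherK (h : H) : iota (iota h) = h.
Proof. by case: HG => A _; case: (A h). Qed.

Lemma other_neq (h : H) : iota h != h.
Proof. by case: HG => A _; case: (A h). Qed.

Lemma edge_other (h : H) : e (iota h) = e h.
Proof. by case: HG => A _; case: (A h). Qed.

Lemma same_edge (h h' : H) : e h = e h' -> h' = h \/ h' = iota h.
Proof. by case: HG => _ [A _]; apply: A. Qed.

Lemma mult_succ (h : H) : m (sg h) = m h.
Proof. by case: HG => _ [_ [_ [_ [_ [A _]]]]]; case: (A h). Qed.

Lemma mult_gt0 (h : H) : (0 < m h)%N.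
Proof. by case: HG => _ [_ [_ [_ [_ [A _]]]]]; case: (A h). Qed.

Lemma quant_neq0 (h : H) :
  ~~ trunc_at h -> ~~ trunc_at (iota h) -> @quant K G h != 0.
Proof. by case: HG => _ [_ [_ [_ [_ [_ Q]]]]]; apply: Q. Qed.

Lemma valency_conn (x y : H) : fconnect sg x y -> valency y = valency x.
Proof.
move=> cxy; apply: eq_card => z; rewrite !inE.
apply/idP/idP => [cyz|cxz]; first exact: connect_trans cxy cyz.
by apply: connect_trans cxz; rewrite (fconnect_sym (@perm_inj _ sg)).
Qed.

Lemma mult_conn (x y : H) : fconnect sg x y -> m y = m x.
Proof.
move=> cxy; rewrite -(iter_findex cxy); elim: (findex _ x y) => //= n IH.
by rewrite mult_succ IH.
Qed.

Lemma trunc_conn (x y : H) : fconnect sg x y -> trunc_at y = trunc_at x.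
Proof. by move=> cxy; rewrite /trunc_at (valency_conn cxy) (mult_conn cxy). Qed.

Lemma valency_succ (h : H) : valency (sg h) = valency h.
Proof. exact/valency_conn/fconnect1. Qed.

Lemma trunc_succ (h : H) : trunc_at (sg h) = trunc_at h.
Proof. exact/trunc_conn/fconnect1. Qed.

Lemma iter_valency (h : H) k : iter (valency h * k) sg h = h.
Proof.
elim: k => [|k IH]; first by rewrite muln0.
by rewrite mulnS iterD IH /valency (iter_order (@perm_inj _ sg)).
Qed.

Lemma valency1P (h : H) : reflect (sg h = h) (valency h == 1%N).
Proof.
apply: (iffP eqP) => [v1|sh]; first by have := iter_valency h 1; rewrite v1.
apply/eqP/card1P; exists h => y; rewrite !inE.
apply/idP/eqP => [c|->]; last exact: connect0.
by rewrite -(iter_findex c); elim: (findex _ h y) => //= n ->.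
Qed.

Lemma trunc_valency (h : H) : trunc_at h -> valency h = 1%N.
Proof. by case/andP => /eqP. Qed.

Hypothesis notA2 : ~ is_A2 G.

(* Outside A_2 no edge has two endpoints of valency one: then the edge would
   be a connected component, hence the whole graph. *)
Lemma notA2_valency (h : H) :
  valency h = 1%N -> valency (iota h) = 1%N -> False.
Proof.
move=> /eqP/valency1P s1 /eqP/valency1P s2; apply: notA2.
pose two x := (x == h) || (x == iota h).
have step x z : two x -> (z == sg x) || (z == iota x) -> two z.
  by rewrite /two => /orP[]/eqP-> /orP[]/eqP->; rewrite ?s1 ?s2 ?otherK eqxx ?orbT.
have all_two y : two y.
  case: HG => _ [_ [_ [_ [C _]]]]; have /connectP[p pp ->] := C h y.
  have : two h by rewrite /two eqxx.
  elim: p (h) pp => [|z p IH] x /= => [_ //|/andP[xz pp] tx].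
  exact: IH pp (step _ _ tx xz).
split=> [|y]; last by case/orP: (all_two y) => /eqP->.
apply/eqP/card1P; exists (e h) => s; rewrite !inE.
case: HG => _ [_ [Es _]]; have [y <-] := Es s.
by case/orP: (all_two y) => /eqP->; rewrite ?edge_other eqxx.
Qed.


Lemma other_trunc_valency (h : H) :
  trunc_at h -> (1 < valency (iota h))%N.
Proof.
move=> th; have := fingraph.order_gt0 sg (iota h); rewrite -/(valency _).
case E: (valency (iota h)) => [|[|n]] // _.
by case: (notA2_valency (trunc_valency th) E).
Qed.

Lemma other_trunc_not_trunc (h : H) :
  trunc_at h -> ~~ trunc_at (iota h).
Proof. by move=> th; rewrite /trunc_at (gtn_eqF (other_trunc_valency th)). Qed.

Lemma Cpow_traject (h : H) k : (Cpow h k).2 = traject sg h (valency h * k).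
Proof.
rewrite /Cpow /cycle_arrows /=; elim: k => [|k IH]; first by rewrite muln0.
by rewrite /= IH mulnS trajectD -[X in iter X]muln1 iter_valency.
Qed.

Lemma size_Cpow (h : H) k : size (Cpow h k).2 = (valency h * k)%N.
Proof. by rewrite Cpow_traject size_traject. Qed.

Lemma Cpow_head (h : H) : exists t, (Cpow h (m h)).2 = h :: t.
Proof.
rewrite Cpow_traject.
have : (0 < valency h * m h)%N by rewrite muln_gt0 fingraph.order_gt0 mult_gt0.
by case: (valency h * m h)%N => [|n] //= _; eexists.
Qed.

Lemma mem_Cpow (h : H) k y : y \in (Cpow h k).2 -> fconnect sg h y.
Proof. by rewrite Cpow_traject => /trajectP[i _ ->]; apply: fconnect_iter. Qed.

Lemma tgt_Cpow (h : H) k : tgt (Cpow h k) = e h.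
Proof.
rewrite /tgt Cpow_traject; case E: (valency h * k)%N => [|n] //=.
by rewrite last_traject -iterS -E iter_valency.
Qed.

Lemma Cpow_rot (h : H) k : (Cpow h k).2 ++ [:: h] = h :: (Cpow (sg h) k).2.
Proof.
by rewrite !Cpow_traject valency_succ cats1 -trajectS trajectSr iter_valency.
Qed.

Lemma infix_pair_Cpow (h a b : H) k : infix [:: a; b] (Cpow h k).2 -> b = sg a.
Proof.
rewrite Cpow_traject; case: (valency h * k)%N => [|n] //=.
exact/infix_pair_fpath/fpath_traject.
Qed.

Lemma Cpow_infix_inj (g h : H) :
  infix (Cpow g (m g)).2 (Cpow h (m h)).2 -> g = h.
Proof.
move=> inf; have [t Et] := Cpow_head g; have [t' Et'] := Cpow_head h.
have cg : fconnect sg h g.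
  by apply: (@mem_Cpow _ (m h)); apply: (mem_infix inf); rewrite Et mem_head.
have := infix_size_eq inf; rewrite !size_Cpow {1}Et Et'.
by rewrite (valency_conn cg) (mult_conn cg) => /(_ erefl) [].
Qed.

Lemma Cpow_other_neq (h : H) : Cpow h (m h) != Cpow (iota h) (m (iota h)).
Proof.
apply/eqP => /(congr1 snd); have [t ->] := Cpow_head h.
have [t' ->] := Cpow_head (iota h); case=> /eqP.
by rewrite eq_sym (negbTE (other_neq h)).
Qed.

Lemma tgt_cat (v : E) (s : seq H) a t : tgt (v, s ++ a :: t) = e (sg (last a t)).
Proof. by case: s => [|b s]; rewrite /tgt /= ?last_cat. Qed.

Lemma tgt_cat_Cpow (v : E) (s : seq H) (h : H) :
  tgt (v, s ++ (Cpow h (m h)).2) = e h.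
Proof.
have [t Et] := Cpow_head h; rewrite Et tgt_cat.
by have := tgt_Cpow h (m h); rewrite /tgt Et.
Qed.

Lemma valid_cat (v : E) (s t : seq H) :
  valid (v, s) -> valid (tgt (v, s), t) -> valid (v, s ++ t).
Proof.
case: s => [|a s] //; rewrite /valid /= => /and3P[ea ps oks].
case: t => [|b t]; first by rewrite cats0 ea ps oks.
rewrite /tgt /= => /and3P[eb pt okt].
rewrite ea cat_path ps /= eq_sym eb pt all_cat /=.
by case/andP: oks => -> ->; case/andP: okt => -> ->.
Qed.

Lemma valid_behead (v : E) (a : H) (s : seq H) :
  valid (v, a :: s) -> valid (e (sg a), s).
Proof.
case: s => [|b s] //; rewrite /valid /= => /and3P[_ /andP[eab ps] /andP[_ oks]].
by rewrite -(eqP eab) eqxx ps oks.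
Qed.

Lemma valid_Cpow (h : H) : ~~ trunc_at h -> valid (Cpow h (m h)).
Proof.
move=> nh; rewrite /valid Cpow_traject.
have : (0 < valency h * m h)%N by rewrite muln_gt0 fingraph.order_gt0 mult_gt0.
case: (valency h * m h)%N => [|n] //= _; rewrite eqxx /=; apply/andP; split.
  by apply: sub_path (fpath_traject sg h n) => x y /eqP <-.
rewrite /arrow_ok nh /=; apply/allP => z /trajectP[i _ ->].
by rewrite (trunc_conn (fconnect_iter _ _ _)) trunc_succ.
Qed.

Local Notation qpath := (qpath G).
Local Notation qfun := (qfun G).
Local Notation BR := (@brauer_relations K G).

Definition rel2_path (h : H) : qpath :=
  (e h, (Cpow (iota h) (m (iota h))).2 ++ [:: iota h]).

Lemma rel1_support (h : H) u : rel1 h u != 0 ->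
  u = Cpow h (m h) \/ u = Cpow (iota h) (m (iota h)).
Proof.
rewrite /rel1 /pathf; case: (u =P Cpow h (m h)) => [->|_]; first by left.
by case: (u =P _) => [->|_]; [right | rewrite !mulr0 subrr eqxx].
Qed.

Lemma rel2_support (h : H) u : rel2 h u != 0 -> u = rel2_path h.
Proof. by rewrite /rel2 /pathf; case: (u =P _) => // _; rewrite eqxx. Qed.

Lemma rel3_support (a b : H) u : rel3 a b u != 0 -> u = (e a, [:: a; b]).
Proof. by rewrite /rel3 /pathf; case: (u =P _) => // _; rewrite eqxx. Qed.

Lemma rel1_at_Cpow (h : H) :
  ~~ trunc_at h -> ~~ trunc_at (iota h) -> rel1 h (Cpow h (m h)) != 0.
Proof.
move=> nh nih; rewrite /rel1 /pathf eqxx (negbTE (Cpow_other_neq h)).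
by rewrite mulr1 mulr0 subr0 quant_neq0.
Qed.

Lemma rel1_other (h : H) w : rel1 (iota h) w = - rel1 h w.
Proof. by rewrite /rel1 otherK opprB. Qed.

Lemma sandwich_rel1_other (p q : qpath) (g : H) w :
  sandwich p (rel1 (iota g)) q w = - sandwich p (rel1 g) q w.
Proof. by rewrite /sandwich; case: ifP; rewrite ?rel1_other ?oppr0. Qed.

Lemma edge_rep_edge (s : E) (h : H) : edge_rep s = Some h -> e h = s.
Proof. by rewrite /edge_rep; case: pickP => // y /eqP <- [<-]. Qed.

Lemma edge_rep_exists (h : H) : exists y, edge_rep (e h) = Some y.
Proof.
rewrite /edge_rep; case: pickP => [y _|/(_ h)]; first by exists y.
by rewrite eqxx.
Qed.

Lemma in_some_cycleI (g a b : H) :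
  ~~ trunc_at g -> infix [:: a; b] (Cpow g (m g)).2 -> in_some_cycle a b.
Proof. by move=> ng iab; apply/existsP; exists g; rewrite /arrow_ok ng. Qed.

Lemma brauer_gen_ideal x : BR x -> gen_ideal BR x.
Proof.
move=> bx; suff [v [v' supp]] : exists v v',
    forall w, x w != 0 -> w.1 = v /\ tgt w = v'.
  apply: gen_ideal_ext (fsym (sandwich_trivial supp)) _.
  exact: gen_ideal_sandwich.
have single Z : x = pathf Z ->
    exists v v', forall w, x w != 0 -> w.1 = v /\ tgt w = v'.
  move=> ->; exists Z.1, (tgt Z); move=> w.
  by rewrite /pathf; case: (w =P Z) => [-> _|_]; rewrite ?eqxx.
case: bx => [[s [h [_ _ _ ex]]]|[[h [_ ex]]|[a [b [_ _ _ _ ex]]]]];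
  [|exact: (single _ ex)|exact: (single _ ex)].
exists (e h); exists (e h) => w; rewrite ex => /rel1_support[]->.
  by rewrite tgt_Cpow.
by rewrite /= tgt_Cpow edge_other.
Qed.

Lemma Cpow_size_ge2 (g : H) : ~~ trunc_at g -> (2 <= size (Cpow g (m g)).2)%N.
Proof.
move=> ng; rewrite size_Cpow ltn_neqAle muln_gt0 fingraph.order_gt0 mult_gt0.
by rewrite !andbT eq_sym muln_eq1.
Qed.

Lemma in_some_cycle_succ (g : H) : ~~ trunc_at g -> in_some_cycle g (sg g).
Proof.
move=> ng; apply: (in_some_cycleI ng); have := Cpow_size_ge2 ng.
rewrite Cpow_traject; case: (valency g * m g)%N => [|[|n]] // _.
by rewrite 2!trajectS; apply: prefixW; rewrite /= !eqxx prefix0s.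
Qed.

Lemma in_some_cycle_short (g a b : H) :
  ~~ trunc_at g -> infix (Cpow g (m g)).2 [:: a; b] -> in_some_cycle a b.
Proof.
move=> ng iab; have := size_infix iab; have := Cpow_size_ge2 ng.
move=> ge2 le2; have /(infix_size_eq iab) eab : size (Cpow g (m g)).2 = 2%N.
  by apply/eqP; rewrite eqn_leq le2 ge2.
by apply: (in_some_cycleI ng); rewrite eab infix_refl.
Qed.

Lemma rel2_path_rot (h : H) :
  (rel2_path h).2 = iota h :: (Cpow (sg (iota h)) (m (iota h))).2.
Proof. by rewrite /= Cpow_rot. Qed.

Lemma size_rel2_path (h : H) :
  size (rel2_path h).2 = (valency (iota h) * m (iota h)).+1.
Proof. by rewrite /= size_cat size_Cpow addn1. Qed.

Lemma rel2_path_infix_inj (h h' : H) :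
  infix (rel2_path h').2 (rel2_path h).2 -> h' = h.
Proof.
move=> inf; have c : fconnect sg (iota h) (iota h').
  have := mem_infix inf; rewrite !rel2_path_rot => /(_ _ (mem_head _ _)).
  rewrite in_cons => /orP[/eqP->|/mem_Cpow]; first exact: connect0.
  exact/connect_trans/fconnect1.
have := infix_size_eq inf; rewrite !size_rel2_path (valency_conn c) (mult_conn c).
by rewrite !rel2_path_rot => /(_ erefl) [/(congr1 iota)]; rewrite !otherK.
Qed.

Lemma Cpow_infix_rot (g h : H) :
  infix (Cpow g (m g)).2 (h :: (Cpow (sg h) (m h)).2) -> g = h \/ g = sg h.
Proof.
move=> inf; have [t Et] := Cpow_head g; have [t' Et'] := Cpow_head (sg h).
have c : fconnect sg h g.
  have := mem_infix inf; rewrite Et => /(_ g (mem_head _ _)).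
  rewrite in_cons => /orP[/eqP->|/mem_Cpow]; first exact: connect0.
  exact/connect_trans/fconnect1.
have st : (size t).+1 = (valency h * m h)%N.
  by have := size_Cpow g (m g); rewrite Et /= (valency_conn c) (mult_conn c).
have st' : (size t').+1 = (valency h * m h)%N.
  by have := size_Cpow (sg h) (m (sg h)); rewrite Et' /= valency_succ mult_succ.
move: inf; rewrite Et -mult_succ Et' => /infixP[s1 [s2 Es]].
have := congr1 size Es; rewrite /= !size_cat /=.
case: s1 Es => [|c1 [|c2 s1]] /= Es sz; first by case: Es => ->; left.
  by case: Es => _ ->; right.
by move: sz st st'; rewrite size_cat; move: (valency h * m h)%N => n; lia.
Qed.

Variable rho : qfun -> Prop.
Hypothesis rho_sub : forall x, rho x -> BR x.
Hypothesis rho_gen : generates rho.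

Lemma relation_needed x w0 : BR x -> x w0 != 0 ->
  (forall r u, BR r -> r u != 0 -> infix u.2 w0.2 -> r = x) -> rho x.
Proof.
move=> bx xw0 unique; apply: NNPP => nrx; move/eqP: xw0; apply.
apply: (gen_ideal_vanish (S := rho)); first exact/(rho_gen x).2/brauer_gen_ideal.
move=> r u rr iu; apply/eqP; apply: contraT => ru.
by case: nrx; rewrite -(unique r u (rho_sub rr) ru iu).
Qed.

Lemma rel1_needed s (h : H) : edge_rep s = Some h ->
  ~~ trunc_at h -> ~~ trunc_at (iota h) -> rho (rel1 h).
Proof.
move=> es nh nih; apply: (relation_needed (w0 := Cpow h (m h))).
- by left; exists s, h.
- exact: rel1_at_Cpow.
move=> r u [[s' [h' [es' _ _ ->]]]|[[h' [_ ->]]|[a [b [_ _ _ nc ->]]]]] ru iu.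
- case/rel1_support: ru iu => -> /Cpow_infix_inj => [->//|ih'].
  have eh : h = h'.
    have ss : s = s'.
      by rewrite -(edge_rep_edge es) -ih' edge_other (edge_rep_edge es').
    by move: es; rewrite ss es' => -[].
  by move: (other_neq h'); rewrite ih' eh eqxx.
- move: iu; rewrite (rel2_support ru) => iu.
  have c : fconnect sg h (iota h').
    apply: (@mem_Cpow _ (m h)); apply: (mem_infix iu).
    by rewrite rel2_path_rot mem_head.
  have := size_infix iu; rewrite size_rel2_path size_Cpow.
  by rewrite (valency_conn c) (mult_conn c) ltnn.
- by case/negP: nc; apply: (in_some_cycleI nh); move: iu; rewrite (rel3_support ru).
Qed.

Lemma rel3_needed (a b : H) : arrow_ok a -> arrow_ok b -> e (sg a) = e b ->
  ~~ in_some_cycle a b -> rho (rel3 a b).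
Proof.
move=> oa ob eab nc; apply: (relation_needed (w0 := (e a, [:: a; b]))).
- by right; right; exists a, b.
- by rewrite /rel3 /pathf eqxx oner_eq0.
move=> r u [[s' [h' [_ nh' nih' ->]]]|[[h' [th' ->]]|[a' [b' [_ _ _ _ ->]]]]] ru iu.
- case/negP: nc; case/rel1_support: ru iu => -> /=; exact: in_some_cycle_short.
- have := size_infix iu; rewrite (rel2_support ru) size_rel2_path /= ltnS.
  have := leq_mul (other_trunc_valency th') (mult_gt0 (iota h')).
  by rewrite muln1 => /leq_trans le /le.
- by move: iu; rewrite (rel3_support ru) => /infix_size_eq/(_ erefl)[-> ->].
Qed.

Lemma rel2_needed (h : H) : trunc_at h -> trunc_at (iota (sg (iota h))) ->
  rho (rel2 h).
Proof.
move=> th ts1; set ih := iota h in ts1 *; set X := sg ih in ts1 *.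
have nih : ~~ trunc_at ih := other_trunc_not_trunc th.
apply: (relation_needed (w0 := rel2_path h)).
- by right; left; exists h.
- by rewrite /rel2 /pathf eqxx oner_eq0.
move=> r u [[s' [h' [_ nh' nih' ->]]]|[[h' [_ ->]]|[a' [b' [_ _ _ nc ->]]]]] ru;
  rewrite rel2_path_rot -/ih -/X.
- have only_s_s1 g : ~~ trunc_at (iota g) ->
      infix (Cpow g (m g)).2 (ih :: (Cpow X (m ih)).2) -> False.
    by move=> nig /Cpow_infix_rot[] eg; move: nig; rewrite eg ?otherK ?th ?ts1.
  case/rel1_support: ru => -> iu; exfalso; apply: (only_s_s1 _ _ iu) => //.
  by rewrite otherK.
- by rewrite (rel2_support ru) -rel2_path_rot => /rel2_path_infix_inj->.
- move=> iu; case/negP: nc; move: iu.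
  rewrite (rel3_support ru) infix_consl -(mult_succ ih) => /orP[|iab].
    have [t ->] := Cpow_head X; rewrite /= => /and3P[/eqP-> /eqP-> _].
    exact: in_some_cycle_succ.
  by apply: (in_some_cycleI _ iab); rewrite trunc_succ.
Qed.

Section TypeTwoRedundancy.
(* Throughout, s is truncated at alpha (half-edge h), the occurrence of s at
   beta is [iota h], s_1 its successor at beta, and s_1 is not truncated at
   its other endpoint. *)
Variable h : H.
Hypothesis th : trunc_at h.
Local Notation ih := (iota h).
Local Notation X := (sg (iota h)).
Local Notation I := (iota (sg (iota h))).
Hypothesis nI : ~~ trunc_at I.

Lemma not_trunc_succ : ~~ trunc_at X.
Proof. by rewrite trunc_succ (other_trunc_not_trunc th). Qed.

(* The key identity: for paths p, q with tgt p = s and q starting at s_1,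
     p (s C^m_{s_1}) q = q_X^-1 (p s) rel1 q + (q_I / q_X) p (s i(s_1)) (t q),
   where C^m_{i(s_1)} = i(s_1) t: the type two relation of s is a consequence
   of the type one relation of s_1 and the type three relation s i(s_1). *)
Lemma rel2_sandwich_decomposition (p q : qpath) (t : seq H) :
  tgt p = e h -> q.1 = e X -> (Cpow I (m I)).2 = I :: t ->
  sandwich p (rel2 h) q =1 (fun w =>
    (@quant K G X)^-1 * sandwich (p.1, p.2 ++ [:: ih]) (rel1 X) q w +
    (@quant K G I / @quant K G X) *
      sandwich p (rel3 ih I) (e (sg I), t ++ q.2) w).
Proof.
move=> tp tq Et w.
set P' : qpath := (p.1, p.2 ++ [:: ih]).
have tP' : tgt P' = e X by rewrite /P' tgt_cat.
have onX g : e g = e X -> pcat P' (Cpow g (m g)) q =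
    Some (p.1, (p.2 ++ [:: ih]) ++ (Cpow g (m g)).2 ++ q.2).
  move=> eg; apply: pcat_some; first by rewrite tP' -eg.
  by rewrite tgt_cat_Cpow eg.
have S2 : sandwich p (rel2 h) q w =
    ((Some (p.1, (p.2 ++ [:: ih]) ++ (Cpow X (m X)).2 ++ q.2) == Some w)%:R).
  rewrite /rel2 -/(rel2_path h) sandwich_pathf pcat_some //; last first.
    by rewrite catA tgt_cat.
  by rewrite rel2_path_rot mult_succ -catA.
have S3 : sandwich p (rel3 ih I) (e (sg I), t ++ q.2) w =
    ((Some (p.1, (p.2 ++ [:: ih]) ++ (Cpow I (m I)).2 ++ q.2) == Some w)%:R).
  rewrite /rel3 sandwich_pathf pcat_some; first by rewrite Et -catA.
    by rewrite tp /= edge_other.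
  by rewrite tgt_cat.
rewrite S2 S3 /rel1 sandwich_lin !sandwich_pathf !onX ?edge_other //.
by field; apply: quant_neq0; [exact: not_trunc_succ | exact: nI].
Qed.

(* s_1 is not an edge of s: beta has valency at least two and s is a leaf. *)
Lemma edge_succ_other_neq : e X != e h.
Proof.
have v2 := other_trunc_valency th.
apply/eqP => /esym/same_edge[Xh|Xih].
  by move: v2; rewrite -valency_succ Xh (trunc_valency th).
by move: v2; rewrite (eqP (introT (valency1P _) Xih)).
Qed.

Lemma valid_after_s (p : qpath) :
  valid p -> tgt p = e h -> valid (p.1, p.2 ++ [:: ih]).
Proof.
move=> vp tp; apply: valid_cat; rewrite -surjective_pairing //.
by rewrite tp /valid /= edge_other eqxx /arrow_ok (other_trunc_not_trunc th).
Qed.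

Lemma valid_cycle_tail (q : qpath) (t : seq H) :
  valid q -> q.1 = e X -> (Cpow I (m I)).2 = I :: t -> valid (e (sg I), t ++ q.2).
Proof.
move=> vq tq Et; apply: (@valid_behead (e X)); rewrite -cat_cons -Et.
apply: valid_cat; first by have := valid_Cpow nI; rewrite /Cpow /= edge_other.
by rewrite -[(Cpow I _).2]cat0s tgt_cat_Cpow edge_other -tq -surjective_pairing.
Qed.

Lemma rel2_in_ideal S : S (rel1 X) \/ S (rel1 I) -> S (rel3 ih I) ->
  forall p q, valid p -> valid q -> gen_ideal S (sandwich p (rel2 h) q).
Proof.
move=> S1 S3 p q vp vq.
have [/andP[/eqP tp /eqP tq]|ncomp] := boolP ((tgt p == e h) && (q.1 == e X));
  last first.
  apply: (gen_ideal_ext (y := fun=> 0)) => [w|]; last exact: gen_ideal0.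
  rewrite /rel2 -/(rel2_path h) sandwich_pathf pcat_none //.
  by rewrite /= catA tgt_cat [_ == q.1]eq_sym.
have [t Et] := Cpow_head I.
apply: gen_ideal_ext (rel2_sandwich_decomposition tp tq Et) _.
apply: gen_ideal_lin; last exact: gen_ideal_sandwich (valid_cycle_tail vq tq Et).
have vP' := valid_after_s vp tp.
case: S1 => S1; first exact: gen_ideal_sandwich.
apply: (gen_ideal_ext (y := fun w => -1 * sandwich _ (rel1 I) q w + 0 * 0)).
  by move=> w; rewrite mulr0 addr0 mulN1r sandwich_rel1_other opprK.
by apply: gen_ideal_lin; [exact: gen_ideal_sandwich | exact: gen_ideal0].
Qed.

Lemma rel2_redundant : minimal_generating rho -> ~ rho (rel2 h).
Proof.
move=> rmin r2; apply: (minimal_irredundant rmin r2); apply: rel2_in_ideal.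
- have [y ey] := edge_rep_exists X; have eyX := edge_rep_edge ey.
  have yX : y = X \/ y = I := same_edge (esym eyX).
  have [ny niy] : ~~ trunc_at y /\ ~~ trunc_at (iota y).
    by case: yX => ->; rewrite ?otherK not_trunc_succ nI.
  have r1y : rho (rel1 y) /\ rel1 y <> rel2 h.
    split; first exact: rel1_needed ey ny niy.
    apply: (qfun_neq (rel1_at_Cpow ny niy)); apply/eqP; apply: contraT.
    move/rel2_support/(congr1 fst); rewrite /= eyX => /eqP.
    by rewrite (negbTE edge_succ_other_neq).
  by case: yX r1y => <-; [left | right].
- split.
    apply: rel3_needed;
      rewrite /arrow_ok ?(other_trunc_not_trunc th) ?nI ?edge_other //.
    apply/existsP => -[g /andP[_ /infix_pair_Cpow /eqP]].
    by rewrite (negbTE (other_neq _)).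
  apply: (qfun_neq (w := (e ih, [:: ih; I]))).
    by rewrite /rel3 /pathf eqxx oner_eq0.
  apply/eqP; apply: contraT => /rel2_support/(congr1 (size \o snd)) /=.
  rewrite -/(rel2_path h) size_rel2_path => /eqP; rewrite eqSS eq_sym.
  have := leq_mul (other_trunc_valency th) (mult_gt0 ih).
  by rewrite muln1 => /gtn_eqF ->.
Qed.

End TypeTwoRedundancy.

End BrauerGraph.

Theorem lemma2p1 (K : fieldType) (G : qbgraph K) (HG : qbg_axioms G)
  (notA2 : ~ is_A2 G) (rho : qfun G -> Prop)
  (rho_sub : forall x, rho x -> brauer_relations x)
  (rho_min : minimal_generating rho) :
  [/\ (forall (s : edgeT G) (h : halfT G), edge_rep s = Some h ->
         ~~ trunc_at h -> ~~ trunc_at (@other K G h) -> rho (rel1 h)),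
      (forall a b : halfT G, arrow_ok a -> arrow_ok b ->
         @edge K G (@succ K G a) = @edge K G b -> ~~ in_some_cycle a b ->
         rho (rel3 a b)) &
      (forall h : halfT G, trunc_at h ->
         (rho (rel2 h) <->
          trunc_at (@other K G (@succ K G (@other K G h)))))].
Proof.
have [rho_gen _] := rho_min; split.
- move=> s h es; exact (rel1_needed HG rho_sub rho_gen es).
- move=> a b oa; exact (rel3_needed HG notA2 rho_sub rho_gen oa).
- move=> h th; split=> [r2|ts1].
    apply/negPn/negP => nI.
    exact (rel2_redundant HG notA2 rho_sub rho_gen th nI rho_min r2).
  exact (rel2_needed HG notA2 rho_sub rho_gen th ts1).
Qed.
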